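(* In the $\mathbf N$-agent system with dependence on marginal distributions described in the context, let $\{\boldsymbol\mu_t^{\mathbf N},\boldsymbol\nu_t^{\mathbf N}\}_{t\ge0}$ be the empirical joint state and action distributions induced by a policy $\boldsymbol\pi=\{\boldsymbol\pi_t\}_{t\ge0}$. Then for every $t\ge0$: (a) $\mathbb E|\boldsymbol\nu_t^{\mathbf N}[\mathcal U]-\nu^{\mathrm{MF}}(\boldsymbol\mu_t^{\mathbf N},\boldsymbol\pi_t)[\mathcal U]|_1\le\frac1{\sqrt{N_{\mathrm{pop}}}}\sqrt{|\mathcal U|}$; (b) $\mathbb E\Big|\frac1{N_{\mathrm{pop}}}\sum_{k\in[K]}\sum_{j=1}^{N_k}r_k(x_{j,k}^t,u_{j,k}^t,\boldsymbol\mu_t^{\mathbf N}[\mathcal X],\boldsymbol\nu_t^{\mathbf N}[\mathcal U])-\sum_{k\in[K]}r_k^{\mathrm{MF}}(\boldsymbol\mu_t^{\mathbf N},\boldsymbol\pi_t)\Big|\le\frac{C_R}{\sqrt{N_{\mathrm{pop}}}}\sqrt{|\mathcal U|}$; (c) $\mathbb E|\boldsymbol\mu_{t+1}^{\mathbf N}[\mathcal X]-P^{\mathrm{MF}}(\boldsymbol\mu_t^{\mathbf N},\boldsymbol\pi_t)[\mathcal X]|_1\le\frac{C_P}{\sqrt{N_{\mathrm{pop}}}}\sqrt{|\mathcal X||\mathcal U|}$, where $C_R=M_R+L_R$ and $C_P=2+L_P$.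
   Context: Fix $K\ge1$, $N_1,\dots,N_K\ge1$, $[K]=\{1,\dots,K\}$, $N_{\mathrm{pop}}=\sum_kN_k$, finite sets $\mathcal X,\mathcal U$, $\mathcal P(A)$ the probability distributions on $A$, $|\cdot|_1$ the $L_1$ norm, constants $M_R,L_R,L_P>0$. Agent $j\in[N_k]$ of class $k$ has state $x_{j,k}^t$ and action $u_{j,k}^t$; $\boldsymbol\mu_t^{\mathbf N}(x,k)=\frac1{N_{\mathrm{pop}}}\sum_{j=1}^{N_k}\mathbf 1(x_{j,k}^t=x)$, $\boldsymbol\nu_t^{\mathbf N}(u,k)=\frac1{N_{\mathrm{pop}}}\sum_{j=1}^{N_k}\mathbf 1(u_{j,k}^t=u)$; marginals $\boldsymbol\mu[\mathcal X](x)=\sum_k\boldsymbol\mu(x,k)$, $\boldsymbol\nu[\mathcal U](u)=\sum_k\boldsymbol\nu(u,k)$. For each $k$: $r_k:\mathcal X\times\mathcal U\times\mathcal P(\mathcal X)\times\mathcal P(\mathcal U)\to\mathbb R$, $P_k:\mathcal X\times\mathcal U\times\mathcal P(\mathcal X)\times\mathcal P(\mathcal U)\to\mathcal P(\mathcal X)$ with $|r_k|\le M_R$, $|r_k(x,u,\mu_1,\nu_1)-r_k(x,u,\mu_2,\nu_2)|\le L_R(|\mu_1-\mu_2|_1+|\nu_1-\nu_2|_1)$, $|P_k(x,u,\mu_1,\nu_1)-P_k(x,u,\mu_2,\nu_2)|_1\le L_P(|\mu_1-\mu_2|_1+|\nu_1-\nu_2|_1)$. A policy is $\boldsymbol\pi=\{\boldsymbol\pi_t\}_{t\ge0}$,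 $\boldsymbol\pi_t=(\pi_k^t)_k$, $\pi_k^t:\mathcal X\times\mathcal P(\mathcal X)\to\mathcal P(\mathcal U)$. Dynamics: conditioned on all states at time $t$, actions are independent across agents with $u_{j,k}^t\sim\pi_k^t(x_{j,k}^t,\boldsymbol\mu_t^{\mathbf N}[\mathcal X])$; conditioned on states and actions, next states are independent with $x_{j,k}^{t+1}\sim P_k(x_{j,k}^t,u_{j,k}^t,\boldsymbol\mu_t^{\mathbf N}[\mathcal X],\boldsymbol\nu_t^{\mathbf N}[\mathcal U])$. Mean-field operators: $\nu^{\mathrm{MF}}(\boldsymbol\mu,\boldsymbol\pi)(u,k)=\sum_x\pi_k(x,\boldsymbol\mu[\mathcal X])(u)\boldsymbol\mu(x,k)$; $P^{\mathrm{MF}}(\boldsymbol\mu,\boldsymbol\pi)(x',k)=\sum_{x,u}\boldsymbol\mu(x,k)\pi_k(x,\boldsymbol\mu[\mathcal X])(u)P_k(x,u,\boldsymbol\mu[\mathcal X],\nu^{\mathrm{MF}}(\boldsymbol\mu,\boldsymbol\pi)[\mathcal U])(x')$; $r_k^{\mathrm{MF}}(\boldsymbol\mu,\boldsymbol\pi)=\sum_{x,u}\boldsymbol\mu(x,k)\pi_k(x,\boldsymbol\mu[\mathcal X])(u)r_k(x,u,\boldsymbol\mu[\mathcal X],\nu^{\mathrm{MF}}(\boldsymbol\mu,\boldsymbol\pi)[\mathcal U])$. *)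

(* Finite N-agent multi-class system, all laws are explicit
   finite sums (everything is finite: agents, states, actions). *)
From HB Require Import structures.
From mathcomp Require Import all_boot all_order all_algebra.
Import Order.TTheory GRing.Theory Num.Theory.
Local Open Scope ring_scope.

Section MFDefs.
Context {R : rcfType} {X U : finType} {K : nat} {N : 'I_K -> nat}.

Definition Agent := {k : 'I_K & 'I_(N k)}.

Definition Npop : nat := \sum_(k < K) N k.

Definition is_prob {T : finType} (p : {ffun T -> R}) : Prop :=
  (forall y, 0 <= p y) /\ \sum_y p y = 1.

Definition l1dist {T : finType} (f g : {ffun T -> R}) : R :=
  \sum_y `|f y - g y|.

Definition emp {T : finType} (c : {ffun Agent -> T}) : {ffun T * 'I_K -> R} :=
  [ffun yk : T * 'I_K =>
     (#|[set j : 'I_(N yk.2) | c (Tagged (fun k => 'I_(N k)) j) == yk.1]|)%:R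
       / (Npop%:R)].

Definition marg {T : finType} (m : {ffun T * 'I_K -> R}) : {ffun T -> R} :=
  [ffun y => \sum_(k < K) m (y, k)].

Definition policy_t := 'I_K -> X -> {ffun X -> R} -> {ffun U -> R}.
Definition reward_t := 'I_K -> X -> U -> {ffun X -> R} -> {ffun U -> R} -> R.
Definition kernel_t :=
  'I_K -> X -> U -> {ffun X -> R} -> {ffun U -> R} -> {ffun X -> R}.

Definition nuMF (pi : policy_t) (m : {ffun X * 'I_K -> R}) : {ffun U * 'I_K -> R} :=
  [ffun uk : U * 'I_K => \sum_x pi uk.2 x (marg m) uk.1 * m (x, uk.2)].

Definition PMF (P : kernel_t) (pi : policy_t) (m : {ffun X * 'I_K -> R})
  : {ffun X * 'I_K -> R} :=
  [ffun xk : X * 'I_K => \sum_x \sum_u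
     m (x, xk.2) * pi xk.2 x (marg m) u
       * P xk.2 x u (marg m) (marg (nuMF pi m)) xk.1].

Definition rMF (r : reward_t) (pi : policy_t) (m : {ffun X * 'I_K -> R}) (k : 'I_K) : R :=
  \sum_x \sum_u m (x, k) * pi k x (marg m) u * r k x u (marg m) (marg (nuMF pi m)).

Definition act_prob (pi : policy_t) (s : {ffun Agent -> X}) (a : {ffun Agent -> U}) : R :=
  \prod_(i : Agent) pi (tag i) (s i) (marg (emp s)) (a i).

Definition trans_prob (P : kernel_t) (s : {ffun Agent -> X}) (a : {ffun Agent -> U})
  (s' : {ffun Agent -> X}) : R :=
  \prod_(i : Agent) P (tag i) (s i) (a i) (marg (emp s)) (marg (emp a)) (s' i).

Fixpoint law (P : kernel_t) (pi : nat -> policy_t) (p0 : {ffun {ffun Agent -> X} -> R})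
  (t : nat) : {ffun {ffun Agent -> X} -> R} :=
  match t with
  | 0 => p0
  | t'.+1 => [ffun s' : {ffun Agent -> X} =>
      \sum_(s : {ffun Agent -> X}) law P pi p0 t' s *
        \sum_(a : {ffun Agent -> U}) act_prob (pi t') s a * trans_prob P s a s']
  end.

End MFDefs.

From HB Require Import structures.
From mathcomp Require Import all_boot all_order all_algebra.
From mathcomp Require Import ring.
Import Order.TTheory GRing.Theory Num.Theory.
Local Open Scope ring_scope.

(* Given the joint state, the agents act independently, and given states and
   actions they move independently.  Each empirical marginal is therefore an
   average of N_pop independent random vectors whose mean is the corresponding
   mean-field quantity.  The expected squared norm of the centred average is at
   most 1/N_pop times the mean second moment, and AM-GM turns this into the
   bound sqrt(dim / N_pop) on the expected L1 deviation.  Lipschitz continuity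
   of r and P transfers the error of the empirical action marginal, part (a),
   to the rewards and transitions in (b) and (c); the bounds, proved for each
   fixed state, are finally averaged over the law of the state at time t. *)

Section Distributions.
Context {R : rcfType}.

Lemma prob_le1 {T : finType} (p : {ffun T -> R}) y : is_prob p -> p y <= 1.
Proof. by case=> p_ge0 <-; rewrite (bigD1 y) //= lerDl sumr_ge0. Qed.

Lemma prob_card_gt0 {T : finType} (p : {ffun T -> R}) : is_prob p -> (0 < #|T|)%N.
Proof.
case=> _ p_sum1; rewrite lt0n; apply/negP => /eqP /card0_eq T0.
by move: p_sum1; rewrite big_pred0 // => /eqP; rewrite eq_sym oner_eq0.
Qed.

Lemma convex_comb_le {T : finType} (w F : T -> R) (B : R) :
  (forall t, 0 <= w t) -> \sum_t w t = 1 -> (forall t, F t <= B) ->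
  \sum_t w t * F t <= B.
Proof.
move=> w_ge0 w_sum1 F_le; apply: le_trans (_ : \sum_t w t * B <= B).
  by apply: ler_sum => t _; rewrite ler_wpM2l.
by rewrite -mulr_suml w_sum1 mul1r.
Qed.

Lemma mean_le {I : finType} (g : I -> R) (B : R) :
  (0 < #|I|)%N -> (forall i, g i <= B) -> #|I|%:R^-1 * \sum_i g i <= B.
Proof.
move=> I_gt0 g_le; rewrite mulr_sumr; apply: convex_comb_le => // [i|].
  by rewrite invr_ge0 ler0n.
by rewrite sumr_const -(mulr_natr #|I|%:R^-1) mulVf // pnatr_eq0 -lt0n.
Qed.

Lemma mean_sum_abs_le {A J : finType} (w : A -> R) (Z : J -> A -> R) (B : R) :
  (forall a, 0 <= w a) -> \sum_a w a = 1 -> 0 < B ->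
  \sum_j \sum_a w a * Z j a ^+ 2 <= B ^+ 2 ->
  \sum_a w a * \sum_j `|Z j a| <= B * Num.sqrt #|J|%:R.
Proof.
move=> w_ge0 w_sum1 B_gt0 moment2.
have [J0 | J_gt0] := posnP #|J|.
  rewrite J0 sqrtr0 mulr0 big1 // => a _.
  by rewrite big_pred0 ?mulr0 // => j; have := card0_eq J0 j.
set c := B / Num.sqrt #|J|%:R.
have c_gt0 : 0 < c by rewrite divr_gt0 // sqrtr_gt0 ltr0n.
(* AM-GM; [c] is chosen so that both resulting terms equal [B * sqrt #|J| / 2]. *)
have abs_le z : `|z| <= z ^+ 2 / (2 * c) + c / 2.
  rewrite -subr_ge0 -(real_normK (num_real z)).
  have -> : `|z| ^+ 2 / (2 * c) + c / 2 - `|z| = (`|z| - c) ^+ 2 / (2 * c).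
    by field; rewrite gt_eqF.
  by rewrite divr_ge0 ?sqr_ge0 // mulr_ge0 // ltW.
apply: le_trans (_ : \sum_a w a * \sum_j (Z j a ^+ 2 / (2 * c) + c / 2) <= _).
  by apply: ler_sum => a _; rewrite ler_wpM2l // ler_sum.
have -> : \sum_a w a * \sum_j (Z j a ^+ 2 / (2 * c) + c / 2) =
    (\sum_j \sum_a w a * Z j a ^+ 2) / (2 * c) + #|J|%:R * c / 2.
  transitivity (\sum_j \sum_a (w a * Z j a ^+ 2 / (2 * c) + w a * (c / 2))).
    rewrite exchange_big; apply: eq_bigr => a _; rewrite mulr_sumr.
    by apply: eq_bigr => j _; rewrite mulrDr mulrA.
  under eq_bigr do rewrite big_split /= -!mulr_suml w_sum1 mul1r.
  by rewrite big_split /= -mulr_suml sumr_const -(mulr_natl (c / 2)) mulrA.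
apply: le_trans (_ : B ^+ 2 / (2 * c) + #|J|%:R * c / 2 <= _).
  by rewrite lerD2r ler_wpM2r // invr_ge0 mulr_ge0 // ltW.
suff -> : B ^+ 2 / (2 * c) + #|J|%:R * c / 2 = B * Num.sqrt #|J|%:R by [].
have sqrtJ_gt0 : 0 < Num.sqrt #|J|%:R :> R by rewrite sqrtr_gt0 ltr0n.
rewrite /c; set sJ := Num.sqrt _; rewrite -(sqr_sqrtr (ler0n R #|J|)) -/sJ.
by field; rewrite !gt_eqF.
Qed.

Lemma sqrt_card_ge1 {T : finType} : (0 < #|T|)%N -> 1 <= Num.sqrt (#|T|%:R : R).
Proof. by move=> T_gt0; rewrite -[X in X <= _]sqrtr1 ler_wsqrtr // ler1n. Qed.

Lemma l1distxx {T : finType} (f : {ffun T -> R}) : l1dist f f = 0.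
Proof. by apply: big1 => y _; rewrite subrr normr0. Qed.

Lemma l1dist_triangle {T : finType} (f g h : {ffun T -> R}) :
  l1dist f h <= l1dist f g + l1dist g h.
Proof. by rewrite -big_split /=; apply: ler_sum => y _; apply: ler_distD. Qed.

Definition dirac {T : finType} (t : T) : {ffun T -> R} := [ffun y => (t == y)%:R].

Lemma dirac_sqr {T : finType} (t y : T) : dirac t y ^+ 2 = dirac t y.
Proof. by rewrite ffunE; case: (t == y); rewrite ?expr0n ?expr1n. Qed.

Lemma sum_mul_dirac {T : finType} (F : T -> R) (y : T) : \sum_t F t * dirac t y = F y.
Proof.
rewrite (bigD1 y) //= ffunE eqxx mulr1 big1 ?addr0 // => t /negbTE t_neq_y.
by rewrite ffunE t_neq_y mulr0.
Qed.

Lemma sum_dirac_mul {T : finType} (t : T) (F : T -> R) : \sum_y dirac t y * F y = F t.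
Proof.
rewrite (bigD1 t) //= ffunE eqxx mul1r big1 ?addr0 // => y /negbTE y_neq_t.
by rewrite ffunE eq_sym y_neq_t mul0r.
Qed.

Lemma is_prob_dirac {T : finType} (t : T) : is_prob (dirac t).
Proof.
split=> [y|]; first by rewrite ffunE ler0n.
by rewrite (bigD1 t) //= big1 => [|y /negbTE]; rewrite ffunE ?eqxx ?addr0 // eq_sym => ->.
Qed.

Definition mixture {I T : finType} (p : I -> {ffun T -> R}) : {ffun T -> R} :=
  [ffun y => #|I|%:R^-1 * \sum_i p i y].

Lemma is_prob_mixture {I T : finType} (p : I -> {ffun T -> R}) :
  (0 < #|I|)%N -> (forall i, is_prob (p i)) -> is_prob (mixture p).
Proof.
move=> I_gt0 p_prob; split=> [y|].
  rewrite ffunE mulr_ge0 ?invr_ge0 ?ler0n ?sumr_ge0 // => i _.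
  by case: (p_prob i).
under eq_bigr do rewrite ffunE.
rewrite -mulr_sumr exchange_big /=.
under eq_bigr => i _ do case: (p_prob i) => _ ->.
by rewrite sumr_const mulVf // pnatr_eq0 -lt0n.
Qed.

Lemma l1dist_mixture_le {I T : finType} (p p' : I -> {ffun T -> R}) (B : R) :
  (0 < #|I|)%N -> (forall i, l1dist (p i) (p' i) <= B) ->
  l1dist (mixture p) (mixture p') <= B.
Proof.
move=> I_gt0 p_p'_le.
apply: le_trans (_ : _ <= #|I|%:R^-1 * \sum_i l1dist (p i) (p' i)) _; last exact: mean_le.
rewrite /l1dist exchange_big mulr_sumr; apply: ler_sum => y _.
rewrite !ffunE -mulrBr -sumrB normrM ger0_norm ?invr_ge0 ?ler0n //.
by rewrite ler_wpM2l ?invr_ge0 ?ler0n ?ler_norm_sum.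
Qed.

Lemma eq_mixture {I T : finType} (p p' : I -> {ffun T -> R}) :
  (forall i, p i = p' i) -> mixture p = mixture p'.
Proof. by move=> pE; apply/ffunP => y; rewrite !ffunE; under eq_bigr do rewrite pE. Qed.

End Distributions.

Lemma prod_if1 {R : pzSemiRingType} {I : finType} (F : I -> R) i :
  \prod_j (if j == i then F j else 1) = F i.
Proof. by rewrite -big_mkcond big_pred1_eq. Qed.

Section ProductLaw.
Context {R : rcfType} {I T : finType} (q : I -> {ffun T -> R}).
Hypothesis q_prob : forall i, is_prob (q i).

Definition prod_law (a : {ffun I -> T}) : R := \prod_i q i (a i).

Lemma prod_law_ge0 a : 0 <= prod_law a.
Proof. by apply: prodr_ge0 => i _; case: (q_prob i). Qed.

Lemma sum_prod_law : \sum_a prod_law a = 1.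
Proof.
rewrite /prod_law -(bigA_distr_bigA (fun i t => q i t)) big1 // => i _.
by case: (q_prob i).
Qed.

Lemma sum_prod_law_prod (G : I -> T -> R) :
  \sum_a prod_law a * \prod_i G i (a i) = \prod_i \sum_t q i t * G i t.
Proof. by rewrite bigA_distr_bigA; apply: eq_bigr => a _; rewrite -big_split. Qed.

Lemma sum_prod_law_coord i (g : T -> R) :
  \sum_a prod_law a * g (a i) = \sum_t q i t * g t.
Proof.
transitivity (\sum_a prod_law a * \prod_j (if j == i then g (a j) else 1)).
  by apply: eq_bigr => a _; rewrite (prod_if1 (fun j => g (a j))).
rewrite (sum_prod_law_prod (fun j t => if j == i then g t else 1)).
rewrite (bigD1 i) //= eqxx [X in _ * X]big1 ?mulr1 // => j /negbTE ->.
by under eq_bigr do rewrite mulr1; case: (q_prob j).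
Qed.

Lemma sum_prod_law_pair i i' (g h : T -> R) : i != i' ->
  \sum_a prod_law a * (g (a i) * h (a i')) =
  (\sum_t q i t * g t) * (\sum_t q i' t * h t).
Proof.
move=> neq_ii'.
pose G j t := (if j == i then g t else 1) * (if j == i' then h t else 1).
transitivity (\sum_a prod_law a * \prod_j G j (a j)).
  apply: eq_bigr => a _; rewrite big_split /=.
  by rewrite (prod_if1 (fun j => g (a j))) (prod_if1 (fun j => h (a j))).
rewrite sum_prod_law_prod (bigD1 i) //= (bigD1 i') 1?eq_sym //= /G.
rewrite eqxx (negbTE neq_ii') eq_sym (negbTE neq_ii') eqxx.
rewrite [X in _ * (_ * X)]big1 ?mulr1 => [|j /andP[/negbTE -> /negbTE ->]].
  by congr (_ * _); apply: eq_bigr => t _; rewrite ?mulr1 ?mul1r.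
by under eq_bigr do rewrite !mulr1; case: (q_prob j).
Qed.

Lemma prod_law_variance_le (f : I -> T -> R) :
  \sum_a prod_law a * (\sum_i (f i (a i) - \sum_t q i t * f i t)) ^+ 2
    <= \sum_i \sum_t q i t * f i t ^+ 2.
Proof.
pose m i := \sum_t q i t * f i t.
pose g i t := f i t - m i.
have q_sum1 i : \sum_t q i t = 1 by case: (q_prob i).
have g_centered i : \sum_t q i t * g i t = 0.
  rewrite /g; under eq_bigr do rewrite mulrBr.
  by rewrite sumrB -mulr_suml q_sum1 mul1r subrr.
(* Independence kills the cross terms. *)
have -> : \sum_a prod_law a * (\sum_i g i (a i)) ^+ 2 =
    \sum_i \sum_t q i t * g i t ^+ 2.
  under eq_bigr do rewrite expr2 mulr_suml mulr_sumr.
  rewrite exchange_big /=; apply: eq_bigr => i _.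
  under eq_bigr do rewrite !mulr_sumr.
  rewrite exchange_big /= (bigD1 i) //= [X in _ + X]big1 ?addr0 => [|j neq_ji].
    exact: (sum_prod_law_coord i (fun t => g i t * g i t)).
  by rewrite sum_prod_law_pair 1?eq_sym // g_centered mul0r.
apply: ler_sum => i _.
have -> : \sum_t q i t * g i t ^+ 2 = \sum_t q i t * f i t ^+ 2 - m i ^+ 2.
  have -> : \sum_t q i t * g i t ^+ 2 = \sum_t q i t * f i t ^+ 2
      - (m i *+ 2) * \sum_t q i t * f i t + m i ^+ 2 * \sum_t q i t.
    rewrite !mulr_sumr -!sumrB -big_split /=; apply: eq_bigr => t _.
    by rewrite /g; ring.
  by rewrite q_sum1 -/(m i); ring.
by rewrite lerBlDr lerDl sqr_ge0.
Qed.

Lemma prod_law_mean_dev_le (J : finType) (f : J -> I -> T -> R) (b : R) :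
  0 < b -> (0 < #|I|)%N ->
  (forall i, \sum_j \sum_t q i t * f j i t ^+ 2 <= b ^+ 2) ->
  \sum_a prod_law a *
      \sum_j `|#|I|%:R^-1 * \sum_i (f j i (a i) - \sum_t q i t * f j i t)|
    <= b * Num.sqrt #|J|%:R / Num.sqrt #|I|%:R.
Proof.
move=> b_gt0 I_gt0 moment2.
have n_gt0 : 0 < #|I|%:R :> R by rewrite ltr0n.
rewrite mulrAC; apply: mean_sum_abs_le.
- exact: prod_law_ge0.
- exact: sum_prod_law.
- by rewrite divr_gt0 ?sqrtr_gt0.
rewrite expr_div_n sqr_sqrtr ?ler0n //.
under eq_bigr do under eq_bigr do rewrite exprMn mulrCA.
under eq_bigr do rewrite -mulr_sumr.
rewrite -mulr_sumr (_ : b ^+ 2 / _ = #|I|%:R^-1 ^+ 2 * (#|I|%:R * b ^+ 2)); last first.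
  by field; rewrite gt_eqF.
rewrite ler_wpM2l ?sqr_ge0 //.
apply: le_trans (_ : \sum_j \sum_i \sum_t q i t * f j i t ^+ 2 <= _).
  by apply: ler_sum => j _; apply: prod_law_variance_le.
rewrite exchange_big /=; apply: le_trans (_ : \sum_(i : I) b ^+ 2 <= _).
  by apply: ler_sum => i _; apply: moment2.
by rewrite sumr_const mulr_natl.
Qed.

Lemma prod_law_mean_abs_dev_le (f : I -> T -> R) (b : R) :
  0 < b -> (0 < #|I|)%N -> (forall i, \sum_t q i t * f i t ^+ 2 <= b ^+ 2) ->
  \sum_a prod_law a * `|#|I|%:R^-1 * \sum_i (f i (a i) - \sum_t q i t * f i t)|
    <= b / Num.sqrt #|I|%:R.
Proof.
move=> b_gt0 I_gt0 moment2.
have := prod_law_mean_dev_le _ (fun _ : 'I_1 => f) _ b_gt0 I_gt0.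
rewrite card_ord sqrtr1 mulr1 => dev_le; apply: le_trans _ (dev_le _).
  by under [X in _ <= X]eq_bigr do rewrite big_ord1.
by move=> i; rewrite big_ord1.
Qed.

Lemma prod_law_l1dist_mixture_le (Y : finType) (F : I -> T -> {ffun Y -> R}) (b : R) :
  0 < b -> (0 < #|I|)%N ->
  (forall i, \sum_y \sum_t q i t * F i t y ^+ 2 <= b ^+ 2) ->
  \sum_a prod_law a * l1dist (mixture (fun i => F i (a i)))
                             (mixture (fun i => [ffun y => \sum_t q i t * F i t y]))
    <= b * Num.sqrt #|Y|%:R / Num.sqrt #|I|%:R.
Proof.
move=> b_gt0 I_gt0 moment2.
apply: le_trans _ (prod_law_mean_dev_le _ (fun y i t => F i t y) _ b_gt0 I_gt0 moment2).
apply: ler_sum => a _; rewrite ler_wpM2l ?prod_law_ge0 //.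
apply: ler_sum => y _; rewrite !ffunE -mulrBr -sumrB.
by under eq_bigr do rewrite ffunE.
Qed.

Lemma prod_law_l1dist_empirical_le : (0 < #|I|)%N ->
  \sum_a prod_law a * l1dist (mixture (fun i => dirac (a i))) (mixture q)
    <= Num.sqrt #|T|%:R / Num.sqrt #|I|%:R.
Proof.
move=> I_gt0; rewrite -[X in X / _]mul1r.
have -> : mixture q = mixture (fun i => [ffun y => \sum_t q i t * dirac t y]).
  by apply: eq_mixture => i; apply/ffunP => y; rewrite ffunE sum_mul_dirac.
apply: prod_law_l1dist_mixture_le => // i.
under eq_bigr do under eq_bigr do rewrite dirac_sqr.
rewrite exchange_big expr1n; under eq_bigr => t _ do
  rewrite -mulr_sumr (proj2 (is_prob_dirac t)) mulr1.
by case: (q_prob i) => _ ->.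
Qed.

End ProductLaw.

Section EmpiricalMeasures.
Context {R : rcfType} {K : nat} {N : 'I_K -> nat}.
Local Notation Agent := (@Agent K N).

Lemma card_Agent : #|{: Agent}| = @Npop K N.
Proof.
rewrite card_tagged /Npop sumnE big_map big_enum /=.
by apply: eq_bigr => k _; rewrite card_ord.
Qed.

Lemma sum_Agent (G : Agent -> R) :
  \sum_i G i = \sum_k \sum_(j : 'I_(N k)) G (Tagged (fun k => 'I_(N k)) j).
Proof.
rewrite (sig_big_dep _ _ (fun k j => G (Tagged (fun k => 'I_(N k)) j))) /=.
by apply: eq_bigr => -[].
Qed.

Lemma sum_emp {T : finType} (c : {ffun Agent -> T}) (F : 'I_K -> T -> R) :
  \sum_k \sum_y emp c (y, k) * F k y = #|{: Agent}|%:R^-1 * \sum_i F (tag i) (c i).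
Proof.
rewrite card_Agent sum_Agent mulr_sumr; apply: eq_bigr => k _.
transitivity (\sum_y \sum_(j : 'I_(N k))
    (@Npop K N)%:R^-1 * (dirac (c (Tagged _ j)) y * F k y)).
  apply: eq_bigr => y _; rewrite -mulr_sumr -mulr_suml ffunE /= mulrA [_ / _]mulrC.
  congr (_ * _ * _); rewrite -sum1dep_card natr_sum big_mkcond /=.
  by apply: eq_bigr => j _; rewrite ffunE; case: (_ == _).
rewrite exchange_big /= mulr_sumr; apply: eq_bigr => j _.
by rewrite -mulr_sumr sum_dirac_mul.
Qed.

Lemma marg_emp {T : finType} (c : {ffun Agent -> T}) :
  marg (emp c) = mixture (fun i => dirac (c i)) :> {ffun T -> R}.
Proof.
apply/ffunP => y; rewrite !ffunE -(sum_emp c (fun _ t => dirac t y)).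
by apply: eq_bigr => k _; rewrite sum_mul_dirac.
Qed.

Lemma is_prob_marg_emp {T : finType} (c : {ffun Agent -> T}) :
  (0 < #|{: Agent}|)%N -> is_prob (marg (emp c) : {ffun T -> R}).
Proof.
by move=> Agent_gt0; rewrite marg_emp; apply: is_prob_mixture => // i; apply: is_prob_dirac.
Qed.

End EmpiricalMeasures.

Section MeanField.
Context {R : rcfType} {X U : finType} {K : nat} {N : 'I_K -> nat}.
Local Notation Agent := (@Agent K N).
Variables (pi : @policy_t R X U K) (s : {ffun Agent -> X}).
Local Notation mu := (marg (emp s) : {ffun X -> R}).
Local Notation nu := (marg (nuMF pi (emp s))).

Lemma marg_nuMF_emp : nu = mixture (fun i => pi (tag i) (s i) mu).
Proof.
apply/ffunP => u; rewrite !ffunE -(sum_emp s (fun k x => pi k x mu u)).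
by apply: eq_bigr => k _; rewrite ffunE; apply: eq_bigr => x _; rewrite mulrC.
Qed.

Lemma marg_PMF_emp (P : @kernel_t R X U K) :
  marg (PMF P pi (emp s)) =
  mixture (fun i => [ffun x' => \sum_u pi (tag i) (s i) mu u * P (tag i) (s i) u mu nu x']).
Proof.
apply/ffunP => x'; rewrite !ffunE; under [in RHS]eq_bigr do rewrite ffunE.
rewrite -(sum_emp s (fun k x => \sum_u pi k x mu u * P k x u mu nu x')).
apply: eq_bigr => k _; rewrite ffunE; apply: eq_bigr => x _.
by rewrite mulr_sumr; apply: eq_bigr => u _; rewrite mulrA.
Qed.

Lemma sum_rMF_emp (r : @reward_t R X U K) :
  \sum_k rMF r pi (emp s) k =
  #|{: Agent}|%:R^-1 * \sum_i \sum_u pi (tag i) (s i) mu u * r (tag i) (s i) u mu nu.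
Proof.
rewrite -(sum_emp s (fun k x => \sum_u pi k x mu u * r k x u mu nu)).
apply: eq_bigr => k _; apply: eq_bigr => x _.
by rewrite mulr_sumr; apply: eq_bigr => u _; rewrite mulrA.
Qed.

(* [act_prob pi s] and [trans_prob P s a] are, by conversion, [prod_law] of
   the individual agents' laws; this is where independence enters below. *)
Hypothesis pi_prob : forall k x m, is_prob m -> is_prob (pi k x m).
Hypothesis Agent_gt0 : (0 < #|{: Agent}|)%N.

Lemma is_prob_marg_emp_state : is_prob mu.
Proof. exact: is_prob_marg_emp. Qed.

Lemma is_prob_policy_emp i : is_prob (pi (tag i) (s i) mu).
Proof. exact: pi_prob is_prob_marg_emp_state. Qed.

Lemma is_prob_marg_nuMF_emp : is_prob nu.
Proof.
by rewrite marg_nuMF_emp; apply: is_prob_mixture => // i; apply: is_prob_policy_emp.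
Qed.

Lemma action_marg_dev_le :
  \sum_a act_prob pi s a * l1dist (marg (emp a)) nu
    <= Num.sqrt #|U|%:R / Num.sqrt #|{: Agent}|%:R.
Proof.
rewrite marg_nuMF_emp; under eq_bigr do rewrite marg_emp.
exact: (prod_law_l1dist_empirical_le _ is_prob_policy_emp Agent_gt0).
Qed.


Section Reward.
Variables (r : @reward_t R X U K) (MR LR : R).
Hypothesis MR_gt0 : 0 < MR.
Hypothesis LR_ge0 : 0 <= LR.
Hypothesis r_bound : forall k x u (m : {ffun X -> R}) (n : {ffun U -> R}),
  is_prob m -> is_prob n -> `|r k x u m n| <= MR.
Hypothesis r_lip : forall k x u (m1 m2 : {ffun X -> R}) (n1 n2 : {ffun U -> R}),
  is_prob m1 -> is_prob n1 -> is_prob m2 -> is_prob n2 ->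
  `|r k x u m1 n1 - r k x u m2 n2| <= LR * (l1dist m1 m2 + l1dist n1 n2).

Lemma reward_dev_split (a : {ffun Agent -> U}) :
  `|#|{: Agent}|%:R^-1 * \sum_i r (tag i) (s i) (a i) mu (marg (emp a))
    - \sum_k rMF r pi (emp s) k|
  <= LR * l1dist (marg (emp a)) nu
     + `|#|{: Agent}|%:R^-1 * \sum_i (r (tag i) (s i) (a i) mu nu
           - \sum_u pi (tag i) (s i) mu u * r (tag i) (s i) u mu nu)|.
Proof.
have mean_split (A B C : Agent -> R) :
    #|{: Agent}|%:R^-1 * \sum_i A i - #|{: Agent}|%:R^-1 * \sum_i C i =
    #|{: Agent}|%:R^-1 * \sum_i (A i - B i) + #|{: Agent}|%:R^-1 * \sum_i (B i - C i).
  rewrite -mulrDr -mulrBr -big_split -sumrB; congr (_ * _).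
  by apply: eq_bigr => i _; rewrite /= addrA subrK.
rewrite sum_rMF_emp (mean_split _ (fun i => r (tag i) (s i) (a i) mu nu)).
apply: le_trans (ler_normD _ _) _; rewrite lerD2r normrM ger0_norm ?invr_ge0 ?ler0n //.
apply: le_trans (_ : #|{: Agent}|%:R^-1 * \sum_i `|r (tag i) (s i) (a i) mu (marg (emp a))
    - r (tag i) (s i) (a i) mu nu| <= _).
  by rewrite ler_wpM2l ?invr_ge0 ?ler0n ?ler_norm_sum.
apply: mean_le => // i.
have := r_lip (tag i) (s i) (a i) mu mu (marg (emp a)) nu.
rewrite l1distxx add0r; apply; by [apply: is_prob_marg_emp_state |
  apply: is_prob_marg_emp | apply: is_prob_marg_nuMF_emp].
Qed.

Lemma reward_dev_le :
  \sum_a act_prob pi s a *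
      `|#|{: Agent}|%:R^-1 * \sum_i r (tag i) (s i) (a i) mu (marg (emp a))
        - \sum_k rMF r pi (emp s) k|
    <= (MR + LR) * Num.sqrt #|U|%:R / Num.sqrt #|{: Agent}|%:R.
Proof.
have mf_dev_le := prod_law_mean_abs_dev_le _ is_prob_policy_emp
  (fun i u => r (tag i) (s i) u mu nu) _ MR_gt0 Agent_gt0.
apply: le_trans (_ : \sum_a act_prob pi s a * (LR * l1dist (marg (emp a)) nu
    + `|#|{: Agent}|%:R^-1 * \sum_i (r (tag i) (s i) (a i) mu nu
         - \sum_u pi (tag i) (s i) mu u * r (tag i) (s i) u mu nu)|) <= _).
  apply: ler_sum => a _; rewrite ler_wpM2l ?reward_dev_split //.
  exact: (prod_law_ge0 _ is_prob_policy_emp).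
under eq_bigr do rewrite mulrDr mulrCA.
rewrite big_split /= -mulr_sumr.
apply: le_trans (lerD (ler_wpM2l LR_ge0 action_marg_dev_le) (mf_dev_le _)) _.
  move=> i; rewrite -[X in _ <= X]mul1r -(proj2 (is_prob_policy_emp i)) mulr_suml.
  apply: ler_sum => u _; rewrite ler_wpM2l //; first by case: (is_prob_policy_emp i).
  have r_le : `|r (tag i) (s i) u mu nu| <= MR.
    by apply: r_bound; [apply: is_prob_marg_emp_state | apply: is_prob_marg_nuMF_emp].
  by rewrite -real_normK ?num_real // !expr2 ler_pM.
have sU_ge1 := sqrt_card_ge1 (R := R) (prob_card_gt0 _ is_prob_marg_nuMF_emp).
have sN_gt0 : 0 < Num.sqrt #|{: Agent}|%:R :> R by rewrite sqrtr_gt0 ltr0n.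
rewrite -subr_ge0 (_ : _ - _ = MR * (Num.sqrt #|U|%:R - 1) / Num.sqrt #|{: Agent}|%:R).
  by rewrite divr_ge0 ?(ltW sN_gt0) // mulr_ge0 ?(ltW MR_gt0) // subr_ge0.
by field; rewrite gt_eqF.
Qed.

End Reward.

Section Transition.
Variables (P : @kernel_t R X U K) (LP : R).
Hypothesis LP_ge0 : 0 <= LP.
Hypothesis P_prob : forall k x u (m : {ffun X -> R}) (n : {ffun U -> R}),
  is_prob m -> is_prob n -> is_prob (P k x u m n).
Hypothesis P_lip : forall k x u (m1 m2 : {ffun X -> R}) (n1 n2 : {ffun U -> R}),
  is_prob m1 -> is_prob n1 -> is_prob m2 -> is_prob n2 ->
  l1dist (P k x u m1 n1) (P k x u m2 n2) <= LP * (l1dist m1 m2 + l1dist n1 n2).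
Local Notation PMFs := (marg (PMF P pi (emp s))).

Lemma is_prob_kernel_emp (a : {ffun Agent -> U}) i :
  is_prob (P (tag i) (s i) (a i) mu (marg (emp a))).
Proof. by apply: P_prob; [apply: is_prob_marg_emp_state | apply: is_prob_marg_emp]. Qed.

Lemma is_prob_kernel_nuMF i u : is_prob (P (tag i) (s i) u mu nu).
Proof. by apply: P_prob; [apply: is_prob_marg_emp_state | apply: is_prob_marg_nuMF_emp]. Qed.

Lemma next_state_dev_given_action_le (a : {ffun Agent -> U}) :
  \sum_s' trans_prob P s a s' * l1dist (marg (emp s')) PMFs
    <= Num.sqrt #|X|%:R / Num.sqrt #|{: Agent}|%:R + LP * l1dist (marg (emp a)) nu
       + l1dist (mixture (fun i => P (tag i) (s i) (a i) mu nu)) PMFs.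
Proof.
set next := mixture (fun i => P (tag i) (s i) (a i) mu (marg (emp a))).
rewrite -addrA; set drift := LP * _ + _.
have triangle s' : l1dist (marg (emp s')) PMFs <= l1dist (marg (emp s')) next + drift.
  apply: le_trans (l1dist_triangle _ next _) _; rewrite lerD2l.
  apply: le_trans (l1dist_triangle _ (mixture (fun i => P (tag i) (s i) (a i) mu nu)) _) _.
  rewrite lerD2r; apply: l1dist_mixture_le => // i.
  have := P_lip (tag i) (s i) (a i) mu mu (marg (emp a)) nu.
  rewrite l1distxx add0r; apply; by [apply: is_prob_marg_emp_state |
    apply: is_prob_marg_emp | apply: is_prob_marg_nuMF_emp].
apply: le_trans (_ : \sum_s' trans_prob P s a s' *
    (l1dist (marg (emp s')) next + drift) <= _).
  apply: ler_sum => s' _; rewrite ler_wpM2l ?triangle //.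
  exact: (prod_law_ge0 _ (is_prob_kernel_emp a)).
under eq_bigr do rewrite mulrDr.
rewrite big_split /= -mulr_suml (sum_prod_law _ (is_prob_kernel_emp a)) mul1r lerD2r.
under eq_bigr do rewrite marg_emp.
exact: (prod_law_l1dist_empirical_le _ (is_prob_kernel_emp a) Agent_gt0).
Qed.

Lemma kernel_mixture_dev_le :
  \sum_a act_prob pi s a * l1dist (mixture (fun i => P (tag i) (s i) (a i) mu nu)) PMFs
    <= Num.sqrt #|X|%:R / Num.sqrt #|{: Agent}|%:R.
Proof.
rewrite marg_PMF_emp -[X in X / _]mul1r.
apply: (prod_law_l1dist_mixture_le _ is_prob_policy_emp) => // i.
rewrite exchange_big expr1n -(proj2 (is_prob_policy_emp i)).
apply: ler_sum => u _; rewrite -mulr_sumr ler_piMr //.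
  by case: (is_prob_policy_emp i).
rewrite -(proj2 (is_prob_kernel_nuMF i u)); apply: ler_sum => x' _.
rewrite expr2 ler_piMr ?(prob_le1 _ _ (is_prob_kernel_nuMF i u)) //.
by case: (is_prob_kernel_nuMF i u).
Qed.

Lemma next_state_marg_dev_le :
  \sum_a act_prob pi s a * \sum_s' trans_prob P s a s' * l1dist (marg (emp s')) PMFs
    <= (2 + LP) * Num.sqrt (#|X|%:R * #|U|%:R) / Num.sqrt #|{: Agent}|%:R.
Proof.
apply: le_trans (_ : \sum_a act_prob pi s a *
    (Num.sqrt #|X|%:R / Num.sqrt #|{: Agent}|%:R + LP * l1dist (marg (emp a)) nu
     + l1dist (mixture (fun i => P (tag i) (s i) (a i) mu nu)) PMFs) <= _).
  apply: ler_sum => a _; rewrite ler_wpM2l ?next_state_dev_given_action_le //.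
  exact: (prod_law_ge0 _ is_prob_policy_emp).
under eq_bigr do rewrite !mulrDr [_ * (LP * _)]mulrCA.
rewrite !big_split /= -mulr_suml (sum_prod_law _ is_prob_policy_emp) mul1r -mulr_sumr.
apply: le_trans (lerD (lerD (lexx _) (ler_wpM2l LP_ge0 action_marg_dev_le))
  kernel_mixture_dev_le) _.
rewrite sqrtrM ?ler0n //.
set sX := Num.sqrt _; set sU := Num.sqrt #|U|%:R; set sN := Num.sqrt _.
have sX_ge1 : 1 <= sX := sqrt_card_ge1 (prob_card_gt0 _ is_prob_marg_emp_state).
have sU_ge1 : 1 <= sU := sqrt_card_ge1 (prob_card_gt0 _ is_prob_marg_nuMF_emp).
have sN_gt0 : 0 < sN by rewrite sqrtr_gt0 ltr0n.
rewrite -subr_ge0 (_ : _ - _ = (2 * sX * (sU - 1) + LP * sU * (sX - 1)) / sN).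
  by rewrite divr_ge0 ?(ltW sN_gt0) // addr_ge0 // !mulr_ge0 ?subr_ge0 ?sqrtr_ge0.
by clearbody sX sU sN; field; rewrite gt_eqF.
Qed.

End Transition.

End MeanField.

Lemma is_prob_law {R : rcfType} {X U : finType} {K : nat} {N : 'I_K -> nat}
    (P : @kernel_t R X U K) (pi : nat -> @policy_t R X U K)
    (p0 : {ffun {ffun @Agent K N -> X} -> R}) :
  (0 < #|{: @Agent K N}|)%N ->
  (forall k x u (m : {ffun X -> R}) (n : {ffun U -> R}),
      is_prob m -> is_prob n -> is_prob (P k x u m n)) ->
  (forall t k x (m : {ffun X -> R}), is_prob m -> is_prob (pi t k x m)) ->
  is_prob p0 -> forall t, is_prob (law P pi p0 t).
Proof.
move=> Agent_gt0 P_prob pi_prob p0_prob; elim=> [//|t [law_ge0 law_sum1]].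
have q_prob s := is_prob_policy_emp (pi t) s (pi_prob t) Agent_gt0.
have p_prob s a := is_prob_kernel_emp s Agent_gt0 P P_prob a.
split=> [s'|].
  rewrite ffunE; apply: sumr_ge0 => s _; rewrite mulr_ge0 ?law_ge0 ?sumr_ge0 // => a _.
  by rewrite mulr_ge0 ?(prod_law_ge0 _ (q_prob s)) ?(prod_law_ge0 _ (p_prob s a)).
under eq_bigr do rewrite ffunE.
rewrite exchange_big /= -law_sum1; apply: eq_bigr => s _.
rewrite -mulr_sumr -[RHS]mulr1; congr (_ * _).
rewrite exchange_big /= -(sum_prod_law _ (q_prob s)); apply: eq_bigr => a _.
by rewrite -mulr_sumr (sum_prod_law _ (p_prob s a)) mulr1.
Qed.

Theorem lemma12 (R : rcfType) (X U : finType) (K : nat) (N : 'I_K -> nat)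
  (MR LR LP : R)
  (r : @reward_t R X U K) (P : @kernel_t R X U K)
  (pi : nat -> @policy_t R X U K)
  (p0 : {ffun {ffun @Agent K N -> X} -> R}) :
  (0 < K)%N -> (forall k, 0 < N k)%N ->
  0 < MR -> 0 < LR -> 0 < LP ->
  (forall k x u (m : {ffun X -> R}) (n : {ffun U -> R}),
      is_prob m -> is_prob n -> `|r k x u m n| <= MR) ->
  (forall k x u (m1 m2 : {ffun X -> R}) (n1 n2 : {ffun U -> R}),
      is_prob m1 -> is_prob n1 -> is_prob m2 -> is_prob n2 ->
      `|r k x u m1 n1 - r k x u m2 n2| <= LR * (l1dist m1 m2 + l1dist n1 n2)) ->
  (forall k x u (m : {ffun X -> R}) (n : {ffun U -> R}),
      is_prob m -> is_prob n -> is_prob (P k x u m n)) ->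
  (forall k x u (m1 m2 : {ffun X -> R}) (n1 n2 : {ffun U -> R}),
      is_prob m1 -> is_prob n1 -> is_prob m2 -> is_prob n2 ->
      l1dist (P k x u m1 n1) (P k x u m2 n2) <= LP * (l1dist m1 m2 + l1dist n1 n2)) ->
  (forall t k x (m : {ffun X -> R}), is_prob m -> is_prob (pi t k x m)) ->
  is_prob p0 ->
  forall t : nat,
  [/\
   (* (a) *)
   \sum_(s : {ffun Agent -> X}) law P pi p0 t s *
     \sum_(a : {ffun Agent -> U}) act_prob (pi t) s a *
       l1dist (marg (emp a)) (marg (nuMF (pi t) (emp s)))
     <= Num.sqrt (#|U|%:R) / Num.sqrt ((@Npop K N)%:R),
   (* (b) *)
   \sum_(s : {ffun Agent -> X}) law P pi p0 t s *
     \sum_(a : {ffun Agent -> U}) act_prob (pi t) s a *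
       `| ((@Npop K N)%:R)^-1 *
            \sum_(i : Agent) r (tag i) (s i) (a i) (marg (emp s)) (marg (emp a))
          - \sum_(k < K) rMF r (pi t) (emp s) k |
     <= (MR + LR) * Num.sqrt (#|U|%:R) / Num.sqrt ((@Npop K N)%:R) &
   (* (c) *)
   \sum_(s : {ffun Agent -> X}) law P pi p0 t s *
     \sum_(a : {ffun Agent -> U}) act_prob (pi t) s a *
       \sum_(s' : {ffun Agent -> X}) trans_prob P s a s' *
         l1dist (marg (emp s')) (marg (PMF P (pi t) (emp s)))
     <= (2 + LP) * Num.sqrt (#|X|%:R * #|U|%:R) / Num.sqrt ((@Npop K N)%:R)].
Proof.
move=> K_gt0 N_gt0 MR_gt0 LR_gt0 LP_gt0 r_bound r_lip P_prob P_lip pi_prob p0_prob t.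
have Agent_gt0 : (0 < #|{: @Agent K N}|)%N.
  by rewrite card_Agent /Npop (bigD1 (Ordinal K_gt0)) //= ltn_addr.
have [law_ge0 law_sum1] := is_prob_law P pi p0 Agent_gt0 P_prob pi_prob p0_prob t.
have pit_prob := pi_prob t; have LR_ge0 := ltW LR_gt0; have LP_ge0 := ltW LP_gt0.
rewrite -card_Agent; split; apply: convex_comb_le => // s.
- exact: action_marg_dev_le.
- exact: reward_dev_le.
- exact: next_state_marg_dev_le.
Qed.
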